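(* Let $\{X_k\}_{k\ge0}$ and $\{Y_k\}_{k\ge0}$ be sequences of vectors in $\mathbb{R}^2$ with non-negative entries, and $\{M_k\}_{k\ge0}$ a sequence of $2\times2$ matrices, satisfying $X_{k+1}\le M_kX_k+Y_k$ (componentwise) for all $k\ge0$. Suppose $\sum_{k=0}^\infty\|Y_k\|<\infty$ and $$M_k=\begin{pmatrix}1&r\\ \alpha_k&\alpha_k\end{pmatrix}$$ for some fixed $r>0$ and non-negative reals $\alpha_k$ with $\sum_{k=0}^\infty\alpha_k<\infty$. Then: (1) the matrices $M_bM_{b-1}\cdots M_a$ are uniformly bounded over $0\le a<b<\infty$; (2) $\{X_k\}_{k\ge0}$ is uniformly bounded. *)

From mathcomp Require Import all_boot all_order all_algebra.
From mathcomp Require Import reals.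
Set Implicit Arguments. Unset Strict Implicit. Unset Printing Implicit Defensive.
Import Order.TTheory GRing.Theory Num.Theory.
Local Open Scope ring_scope.

Definition i0 : 'I_2 := @Ordinal 2 0 isT.
Definition i1 : 'I_2 := @Ordinal 2 1 isT.

Fixpoint mprod_from {R : ringType} (M : nat -> 'M[R]_2) (a n : nat) : 'M[R]_2 :=
  match n with
  | 0 => M a
  | n'.+1 => M (a + n'.+1)%N *m mprod_from M a n'
  end.

(* M_b M_(b-1) ... M_a  (for a <= b) *)
Definition mprod {R : ringType} (M : nat -> 'M[R]_2) (a b : nat) : 'M[R]_2 :=
  mprod_from M a (b - a).

(* l1 norm of a vector of R^2 (all norms on R^2 are equivalent) *)
Definition vnorm {R : numDomainType} (v : 'cV[R]_2) : R :=
  \sum_(i < 2) `|v i 0|.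

From mathcomp Require Import all_boot all_order all_algebra.
From mathcomp Require Import reals.
From mathcomp Require Import lra.
From mathcomp Require Import sequences exp.
Set Implicit Arguments. Unset Strict Implicit. Unset Printing Implicit Defensive.
Import Order.TTheory GRing.Theory Num.Theory.
Local Open Scope ring_scope.

(* On the nonnegative cone the linear functional [wsum v = v_1 + r v_2] is
   almost invariant under the M_k: [wsum (M_k v) = wsum v + r alpha_k (v_1 + v_2)
   <= (1 + (1 + r) alpha_k) wsum v], and wsum is equivalent to the l1 norm there.
   So along any nonnegative trajectory of [X_{k+1} <= M_k X_k + Y_k] the
   numbers [f_k = wsum X_k] satisfy [f_{k+1} <= (1 + beta_k) f_k + g_k] with
   summable beta and g, and a discrete Gronwall inequality bounds them by
   [exp (sum beta) (f_0 + sum g)].  The columns of [M_b ... M_a] are such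
   trajectories with [Y = 0]. *)

Lemma ord2P (i : 'I_2) : i = i0 \/ i = i1.
Proof. by case: i => [[|[|//]]] ?; [left | right]; apply: val_inj. Qed.

Lemma mulmx2E (R : pzRingType) (A : 'M[R]_2) (v : 'cV[R]_2) i :
  (A *m v) i 0 = A i i0 * v i0 0 + A i i1 * v i1 0.
Proof.
rewrite mxE !big_ord_recl big_ord0 addr0.
by congr (A i _ * v _ 0 + A i _ * v _ 0); apply: val_inj.
Qed.

Lemma vnorm_ge0E (R : numDomainType) (v : 'cV[R]_2) :
  (forall i, 0 <= v i 0) -> vnorm v = v i0 0 + v i1 0.
Proof.
move=> v0; rewrite /vnorm !big_ord_recl big_ord0 addr0 !ger0_norm ?v0 //.
by congr (v _ 0 + v _ 0); apply: val_inj.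
Qed.

Lemma ler_abs_vnorm (R : numDomainType) (v : 'cV[R]_2) i : `|v i 0| <= vnorm v.
Proof. by rewrite /vnorm (bigD1 i) //= lerDl sumr_ge0. Qed.

Lemma sum_shift_le (R : numDomainType) (u : nat -> R) (A : R) :
  (forall k, 0 <= u k) -> (forall n, \sum_(k < n) u k <= A) ->
  forall s n, \sum_(k < n) u (s + k)%N <= A.
Proof.
move=> u0 uA s n; apply: le_trans (uA (s + n)%N).
by rewrite big_split_ord /= lerDr sumr_ge0.
Qed.

Lemma discrete_gronwall (R : realType) (f g beta : nat -> R) :
  0 <= f 0%N -> (forall n, 0 <= g n) -> (forall n, 0 <= beta n) ->
  (forall n, f n.+1 <= (1 + beta n) * f n + g n) ->
  forall n, f n <= expR (\sum_(k < n) beta k) * (f 0%N + \sum_(k < n) g k).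
Proof.
move=> f0 g0 beta0 fS; elim=> [|n IH].
  by rewrite !big_ord0 expR0 mul1r addr0.
rewrite !big_ord_recr /= expRD addrA.
set E := expR (\sum_(k < n) beta k) in IH *.
set F := f 0%N + \sum_(k < n) g k in IH *.
have F0 : 0 <= F by rewrite addr_ge0 ?sumr_ge0.
have E1 : 1 <= E by rewrite -expR0 ler_expR sumr_ge0.
have eb1 : 1 <= expR (beta n).
  by apply: le_trans (expR_ge1Dx _); rewrite lerDl.
apply: le_trans (fS n) _; rewrite mulrDr; apply: lerD.
  apply: le_trans (ler_wpM2l _ IH) _; first by rewrite addr_ge0.
  rewrite -mulrA mulrCA; apply: ler_wpM2l; first exact: le_trans ler01 E1.
  exact: ler_wpM2r F0 _ _ (expR_ge1Dx _).
by rewrite ler_peMl // mulr_ege1.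
Qed.

Section WeightedSum.
Variables (R : realFieldType) (r : R).
Hypothesis r_gt0 : 0 < r.
Implicit Types u v : 'cV[R]_2.

Definition wsum (v : 'cV[R]_2) : R := v i0 0 + r * v i1 0.

Lemma wsum_ge0 v : (forall i, 0 <= v i 0) -> 0 <= wsum v.
Proof. by move=> v0; rewrite addr_ge0 // mulr_ge0 // ltW. Qed.

Lemma wsumD u v : wsum (u + v) = wsum u + wsum v.
Proof. by rewrite /wsum !mxE mulrDr addrACA. Qed.

Lemma ler_wsum u v : (forall i, u i 0 <= v i 0) -> wsum u <= wsum v.
Proof. by move=> uv; rewrite lerD // ler_wpM2l // ltW. Qed.

Lemma wsum_le_vnorm v : wsum v <= (1 + r) * vnorm v.
Proof.
rewrite /vnorm !big_ord_recl big_ord0 addr0.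
have -> : lift ord0 ord0 = i1 by apply: val_inj.
have -> : ord0 = i0 by apply: val_inj.
rewrite /wsum mulrDl mul1r; apply: lerD.
  by apply: le_trans (ler_norm _) _; rewrite lerDl.
apply: ler_wpM2l; first exact: ltW.
by apply: le_trans (ler_norm _) _; rewrite lerDr.
Qed.

Lemma vnorm_le_wsum v : (forall i, 0 <= v i 0) -> vnorm v <= (1 + r^-1) * wsum v.
Proof.
move=> v0; rewrite vnorm_ge0E // /wsum.
have rVr : r^-1 * r = 1 by rewrite mulVf // gt_eqF.
rewrite mulrDl mul1r mulrDr mulrA rVr mul1r.
have : 0 <= r * v i1 0 by rewrite mulr_ge0 // ltW.
have : 0 <= r^-1 * v i0 0 by rewrite mulr_ge0 // invr_ge0 ltW.
lra.
Qed.

Lemma wsum_mulmx_le (P : 'M[R]_2) a v :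
  P i0 i0 = 1 -> P i0 i1 = r -> P i1 i0 = a -> P i1 i1 = a -> 0 <= a ->
  (forall i, 0 <= v i 0) -> wsum (P *m v) <= (1 + (1 + r) * a) * wsum v.
Proof.
move=> P00 P01 P10 P11 a0 v0; rewrite /wsum !mulmx2E P00 P01 P10 P11.
have := v0 i0; have := v0 i1.
have : 0 <= a * v i0 0 by rewrite mulr_ge0.
have : 0 <= r * r * a * v i1 0 by rewrite !mulr_ge0 // ltW.
nra.
Qed.

End WeightedSum.

Section Trajectories.
Variables (R : realType) (r A : R) (M : nat -> 'M[R]_2) (alpha : nat -> R).
Hypotheses (r_gt0 : 0 < r) (alpha_ge0 : forall k, 0 <= alpha k).
Hypothesis alpha_sum_le : forall n, \sum_(k < n) alpha k <= A.
Hypothesis M_entries : forall k,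
  M k i0 i0 = 1 /\ M k i0 i1 = r /\ M k i1 i0 = alpha k /\ M k i1 i1 = alpha k.

Lemma M_ge0 k i j : 0 <= M k i j.
Proof.
have [M00 [M01 [M10 M11]]] := M_entries k.
by case: (ord2P i) => ->; case: (ord2P j) => ->; rewrite ?M00 ?M01 ?M10 ?M11 // ltW.
Qed.

Lemma wsum_trajectory_le (s : nat) (u w : nat -> 'cV[R]_2) :
  (forall n i, 0 <= u n i 0) -> (forall n i, 0 <= w n i 0) ->
  (forall n i, u n.+1 i 0 <= (M (s + n) *m u n + w n) i 0) ->
  forall n, wsum r (u n)
    <= expR ((1 + r) * A) * (wsum r (u 0%N) + \sum_(k < n) wsum r (w k)).
Proof.
move=> u0 w0 uS n.
have uS' m : wsum r (u m.+1)
    <= (1 + (1 + r) * alpha (s + m)) * wsum r (u m) + wsum r (w m).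
  apply: le_trans (ler_wsum r_gt0 (uS m)) _; rewrite wsumD lerD2r.
  have [? [? [? ?]]] := M_entries (s + m).
  exact: wsum_mulmx_le.
have r1 : 0 <= 1 + r by rewrite addr_ge0 // ltW.
apply: le_trans (discrete_gronwall _ _ _ uS' n) _.
- exact: wsum_ge0.
- by move=> m; apply: wsum_ge0.
- by move=> m; rewrite mulr_ge0.
apply: ler_wpM2r.
  by rewrite addr_ge0 ?sumr_ge0 ?wsum_ge0 // => m _; apply: wsum_ge0.
by rewrite ler_expR -mulr_sumr; apply: ler_wpM2l => //; apply: sum_shift_le.
Qed.

Lemma alpha_le k : alpha k <= A.
Proof. by have := sum_shift_le alpha_ge0 alpha_sum_le k 1; rewrite big_ord1 addn0. Qed.

Lemma mprod_from_ge0 a n i j : 0 <= mprod_from M a n i j.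
Proof.
elim: n i j => [|n IH] i j /=; first exact: M_ge0.
by rewrite mxE sumr_ge0 // => l _; rewrite mulr_ge0 ?M_ge0.
Qed.

Lemma wsum_col_M_le a j : wsum r (col j (M a)) <= 1 + r + r * A.
Proof.
have [M00 [M01 [M10 M11]]] := M_entries a.
have rA : r * alpha a <= r * A by rewrite ler_pM2l ?alpha_le.
rewrite /wsum !mxE; case: (ord2P j) => ->; rewrite ?M00 ?M01 ?M10 ?M11;
  have := r_gt0; lra.
Qed.

Lemma abs_mprod_from_le a n i j :
  `|mprod_from M a n i j| <= (1 + r^-1) * (expR ((1 + r) * A) * (1 + r + r * A)).
Proof.
pose u m := col j (mprod_from M a m).
have u_ge0 m k : 0 <= u m k 0 by rewrite mxE mprod_from_ge0.
have uS m k : u m.+1 k 0 <= (M (a.+1 + m) *m u m + 0) k 0.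
  by rewrite addr0 addSnnS /u /= !colE mulmxA.
have zero_ge0 (m : nat) k : 0 <= (0 : 'cV[R]_2) k 0 by rewrite mxE.
have := wsum_trajectory_le u_ge0 zero_ge0 uS n.
rewrite big1 => [|k _]; last by rewrite /wsum !mxE mulr0 addr0.
rewrite addr0 => u_le.
have -> : mprod_from M a n i j = u n i 0 by rewrite mxE.
apply: le_trans (ler_abs_vnorm _ _) _.
apply: le_trans (vnorm_le_wsum r_gt0 (u_ge0 n)) _.
apply: ler_wpM2l; first by rewrite addr_ge0 // invr_ge0 ltW.
apply: le_trans u_le _; apply: ler_wpM2l; first exact: expR_ge0.
exact: wsum_col_M_le.
Qed.

Lemma vnorm_trajectory_le (S : R) (u w : nat -> 'cV[R]_2) :
  (forall n i, 0 <= u n i 0) -> (forall n i, 0 <= w n i 0) ->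
  (forall n i, u n.+1 i 0 <= (M n *m u n + w n) i 0) ->
  (forall n, \sum_(k < n) vnorm (w k) <= S) ->
  forall n, vnorm (u n)
    <= (1 + r^-1) * (expR ((1 + r) * A) * (wsum r (u 0%N) + (1 + r) * S)).
Proof.
move=> u_ge0 w_ge0 uS wS n.
apply: le_trans (vnorm_le_wsum r_gt0 (u_ge0 n)) _.
apply: ler_wpM2l; first by rewrite addr_ge0 // invr_ge0 ltW.
apply: le_trans (wsum_trajectory_le (s := 0) u_ge0 w_ge0 uS n) _.
apply: ler_wpM2l; first exact: expR_ge0.
rewrite lerD2l; apply: le_trans (_ : \sum_(k < n) (1 + r) * vnorm (w k) <= _).
  by apply: ler_sum => k _; apply: wsum_le_vnorm.
by rewrite -mulr_sumr; apply: ler_wpM2l (wS n); rewrite addr_ge0 // ltW.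
Qed.

End Trajectories.

Theorem proposition3p2 (R : realType) (X Y : nat -> 'cV[R]_2)
  (M : nat -> 'M[R]_2) (r : R) (alpha : nat -> R) :
  (forall k i, 0 <= X k i 0) ->
  (forall k i, 0 <= Y k i 0) ->
  (forall k i, X k.+1 i 0 <= (M k *m X k + Y k) i 0) ->
  (exists S : R, forall n, \sum_(k < n) vnorm (Y k) <= S) ->
  0 < r ->
  (forall k, 0 <= alpha k) ->
  (exists A : R, forall n, \sum_(k < n) alpha k <= A) ->
  (forall k, M k i0 i0 = 1 /\ M k i0 i1 = r /\
             M k i1 i0 = alpha k /\ M k i1 i1 = alpha k) ->
  (exists C : R, forall a b, (a < b)%N -> forall i j, `|mprod M a b i j| <= C) /\
  (exists C : R, forall k, vnorm (X k) <= C).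
Proof.
move=> X_ge0 Y_ge0 XS [S YS] r_gt0 alpha_ge0 [A alphaA] M_entries; split.
  eexists => a b _ i j.
  exact: (abs_mprod_from_le r_gt0 alpha_ge0 alphaA M_entries).
eexists => k.
exact: (vnorm_trajectory_le r_gt0 alpha_ge0 alphaA M_entries X_ge0 Y_ge0 XS YS).
Qed.
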